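(* Let $Y$ be a solid vector space, let $(X,d)$ be a complete cone metric space over $Y$, and let $D\subseteq X$ and $T\colon D\to X$ be a mapping satisfying: (a) $d(Tx,T^2x)\preceq \lambda\, d(x,Tx)$ for all $x\in D$ with $Tx\in D$, where $0\le\lambda<1$; (b) there is $x_0\in D$ such that $\overline U(x_0,r)\subseteq D$, where $r=\frac{1}{1-\lambda}\,d(x_0,Tx_0)$. Then: (i) The Picard iteration $x_{n+1}=Tx_n$ ($n=0,1,2,\dots$) starting from $x_0$ is well defined (i.e. $x_n\in D$ for all $n$), remains in the closed ball $\overline U(x_0,r)$ and converges to a point $\xi\in\overline U(x_0,r)$. (ii) $d(x_n,\xi)\preceq \frac{\lambda^n}{1-\lambda}\, d(x_0,Tx_0)$ for all $n\ge 0$. (iii) $d(x_n,\xi)\preceq\frac{1}{1-\lambda}\,d(x_n,x_{n+1})$ for all $n\ge0$, and $d(x_n,\xi)\preceq \frac{\lambda}{1-\lambda}\,d(x_n,x_{n-1})$ for all $n\ge 1$. (iv) If at least one of the following conditions holds, then $\xi$ is a fixed point of $T$: (F1) $T$ is continuous at $\xi$; (F2) $T$ has a closed graph, i.e. $\{(x,Tx):x\in D\}$ is a closed subset of $D\times X$.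
   Context: Vector space with convergence: a real vector space $Y$ with a relation $\to$ between sequences in $Y$ and points of $Y$ (write $x_n\to x$, $x$ is ''a limit''; uniqueness of limits is not assumed) such that (C1) $x_n\to x$, $y_n\to y$ imply $x_n+y_n\to x+y$; (C2) $x_n\to x$, $\lambda\in\mathbb R$ imply $\lambda x_n\to\lambda x$; (C3) $\lambda_n\to\lambda$ in $\mathbb R$, $x\in Y$ imply $\lambda_n x\to\lambda x$. A set $A\subseteq Y$ is open if $x_n\to x\in A$ implies $x_n\in A$ for all but finitely many $n$; closed if $x_n\to x$ and $x_n\in A$ for all $n$ imply $x\in A$. The interior $A^\circ$ is the union of all open subsets of $A$. A cone is a nonempty closed $K\subseteq Y$ with $\lambda K\subseteq K$ ($\lambda\ge0$), $K+K\subseteq K$, $K\cap(-K)=\{0\}$; it is solid if $K\neq\{0\}$ and $K^\circ\ne\emptyset$. A vector ordering is a partial order $\preceq$ on $Y$ with (V1) $x\preceq y\Rightarrow x+z\preceq y+z$; (V2) $\lambda\ge0$, $x\preceq y\Rightarrow \lambda x\preceq\lambda y$; (V3) $x_n\to x$, $y_n\to y$, $x_n\preceq y_n$ for all $n$ $\Rightarrow x\preceq y$. A solid vector space is such a $(Y,\preceq,\to)$ whose positive cone $K=\{x:x\succeq0\}$ is solid, equipped with $x\prec y$ iff $y-x\in K^\circ$. Cone metric space over $Y$: a nonempty set $X$ with $d\colon X\times X\to Y$ such that $d(x,y)\succeq 0$, $d(x,y)=0$ iff $x=y$, $d(x,y)=d(y,x)$, and $d(x,y)\preceq d(x,z)+d(z,y)$.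 The open balls $U(x,r)=\{y\in X:d(y,x)\prec r\}$ ($r\succ0$) form a basis of a topology on $X$ (the cone metric topology), with which $X$ is endowed; thus $x_n\to x$ in $X$ iff for every $c\succ0$, $d(x_n,x)\prec c$ for all but finitely many $n$. Closed ball: $\overline U(x,r)=\{y\in X: d(y,x)\preceq r\}$ for $r\succeq0$. A sequence $(x_n)$ is Cauchy if for every $c\succ0$ there is $N$ with $d(x_n,x_m)\prec c$ for all $n,m>N$; $X$ is complete if every Cauchy sequence converges. Convention: $0^0=1$. *)

From HB Require Import structures.
From mathcomp Require Import all_boot all_order all_algebra.
From mathcomp Require Import all_classical all_reals topology normedtype.
Set Implicit Arguments. Unset Strict Implicit. Unset Printing Implicit Defensive.
Import Order.TTheory GRing.Theory Num.Theory.
Import numFieldNormedType.Exports.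
Local Open Scope ring_scope.
Local Open Scope classical_set_scope.

Section Defs.
Variables (R : realType) (Y : lmodType R).

Definition conv_open (conv : (nat -> Y) -> Y -> Prop) (A : set Y) : Prop :=
  forall (xs : nat -> Y) (x : Y), conv xs x -> A x ->
    exists N : nat, forall n : nat, (N <= n)%N -> A (xs n).

Definition conv_interior (conv : (nat -> Y) -> Y -> Prop) (A : set Y) : set Y :=
  fun x => exists U : set Y, conv_open conv U /\ U `<=` A /\ U x.

(** A solid vector space: a real vector space with convergence (C1)-(C3),
    a vector ordering (partial order with (V1)-(V3)) whose positive cone
    K = {x | 0 <= x} satisfies K <> {0} and has nonempty interior. *)
Record solid_vector_space := SolidVectorSpace {
  conv : (nat -> Y) -> Y -> Prop;
  vle : Y -> Y -> Prop;
  conv_add : forall xs ys x y, conv xs x -> conv ys y ->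
    conv (fun n => xs n + ys n) (x + y);
  conv_scale : forall xs x (l : R), conv xs x -> conv (fun n => l *: xs n) (l *: x);
  conv_scalar : forall (ls : nat -> R) (l : R) (x : Y), ls @ \oo --> l ->
    conv (fun n => ls n *: x) (l *: x);
  vle_refl : forall x, vle x x;
  vle_anti : forall x y, vle x y -> vle y x -> x = y;
  vle_trans : forall x y z, vle x y -> vle y z -> vle x z;
  vle_add : forall x y z, vle x y -> vle (x + z) (y + z);
  vle_scale : forall (l : R) x y, 0 <= l -> vle x y -> vle (l *: x) (l *: y);
  vle_closed : forall xs ys x y, conv xs x -> conv ys y ->
    (forall n, vle (xs n) (ys n)) -> vle x y;
  cone_nontrivial : exists x, vle 0 x /\ x <> 0;
  cone_solid : exists x, conv_interior conv (fun z => vle 0 z) x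
}.

Variable S : solid_vector_space.

Definition vlt (x y : Y) : Prop :=
  conv_interior (conv S) (fun z => vle S 0 z) (y - x).

Variable X : Type.

Definition is_cone_metric (d : X -> X -> Y) : Prop :=
  (forall x y, vle S 0 (d x y)) /\
  (forall x y, d x y = 0 <-> x = y) /\
  (forall x y, d x y = d y x) /\
  (forall x y z, vle S (d x y) (d x z + d z y)).

Variable d : X -> X -> Y.

Definition oball (x : X) (r : Y) : set X := fun y => vlt (d y x) r.
Definition cball (x : X) (r : Y) : set X := fun y => vle S (d y x) r.

Definition cm_open (A : set X) : Prop :=
  forall x, A x -> exists (z : X) (r : Y), vlt 0 r /\ oball z r x /\ oball z r `<=` A.

Definition cm_conv (xs : nat -> X) (x : X) : Prop :=
  forall c, vlt 0 c -> exists N : nat, forall n : nat, (N <= n)%N -> vlt (d (xs n) x) c.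

Definition cm_cauchy (xs : nat -> X) : Prop :=
  forall c, vlt 0 c -> exists N : nat, forall n m : nat, (N < n)%N -> (N < m)%N ->
    vlt (d (xs n) (xs m)) c.

Definition cm_complete : Prop :=
  forall xs, cm_cauchy xs -> exists x, cm_conv xs x.

(** T : D -> X (represented as a total map, only its values on D matter)
    is continuous at xi (topologically, w.r.t. the subspace D). *)
Definition cm_continuous_at (D : set X) (T : X -> X) (xi : X) : Prop :=
  forall V, cm_open V -> V (T xi) ->
    exists W, cm_open W /\ W xi /\ forall y, D y -> W y -> V (T y).

(** The graph {(x,Tx) : x in D} is closed in D × X (product of the subspace
    topology on D and the cone metric topology on X): its complement in
    D × X is open. *)
Definition cm_closed_graph (D : set X) (T : X -> X) : Prop :=
  forall a b, D a -> b <> T a ->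
    exists V1 V2, cm_open V1 /\ cm_open V2 /\ V1 a /\ V2 b /\
      forall x y, D x -> V1 x -> V2 y -> y <> T x.

End Defs.

From HB Require Import structures.
From mathcomp Require Import all_boot all_order all_algebra.
From mathcomp Require Import all_classical all_reals topology normedtype sequences.
From mathcomp Require Import ring.
Set Implicit Arguments. Unset Strict Implicit.
Import Order.TTheory GRing.Theory Num.Theory.
Import numFieldNormedType.Exports.
Local Open Scope ring_scope.
Local Open Scope classical_set_scope.

(* Condition (a) makes the steps d(x_n, x_{n+1}) decay like
   lambda^n d(x_0, x_1) as long as the iterates stay in D; summing the
   geometric series bounds d(x_0, x_n) by r, so the iterates stay in the
   ball, hence in D.  The same estimate started at x_n gives
   d(x_n, x_m) <= (1 - lambda)^-1 d(x_n, x_{n+1}) <= lambda^n r, which makes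
   the sequence Cauchy and passes to the limit.  A cone has no norm, so every
   "<= epsilon" argument goes through interior points of the cone, and limits
   of inequalities through the closedness (V3) of the ordering. *)

Section SolidVectorSpace.
Variables (R : realType) (Y : lmodType R) (S : solid_vector_space Y).

Lemma conv_cst (a : Y) : conv S (fun _ => a) a.
Proof. by have := conv_scalar S a (cvg_cst (1 : R)); rewrite scale1r; apply. Qed.

Lemma vleD (a b c e : Y) : vle S a b -> vle S c e -> vle S (a + c) (b + e).
Proof.
move=> hab hce; apply: (vle_trans (vle_add c hab)).
by rewrite !(addrC b); exact: vle_add.
Qed.

Lemma subv_ge0 (a b : Y) : vle S 0 (b - a) <-> vle S a b.
Proof.
split=> h; first by have := vle_add a h; rewrite add0r subrK.
by have := vle_add (- a) h; rewrite subrr.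
Qed.

Lemma vle_scale2r (s t : R) (v : Y) : s <= t -> vle S 0 v -> vle S (s *: v) (t *: v).
Proof.
move=> st v0; apply/subv_ge0; rewrite -scalerBl.
have ts : 0 <= t - s by rewrite subr_ge0.
by have := vle_scale ts v0; rewrite scaler0.
Qed.

Lemma vltW (a b : Y) : vlt S a b -> vle S a b.
Proof. by case=> U [_ [UK Uba]]; apply/subv_ge0; exact: UK. Qed.

(* Translations are homeomorphisms for the convergence, by (C1). *)
Lemma vle_vlt_trans (a b c : Y) : vle S a b -> vlt S b c -> vlt S a c.
Proof.
move=> /subv_ge0 hab [U [Uo [UK Ucb]]].
exists (fun y => U (y - (b - a))); split; last split.
- by move=> xs x hx Ux; exact: Uo _ _ (conv_add hx (conv_cst _)) Ux.
- by move=> y /UK h; apply: vle_trans hab _; apply/subv_ge0.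
- by rewrite opprB addrA subrK.
Qed.

Lemma vltD2r (a b k : Y) : vlt S a b -> vlt S (a + k) (b + k).
Proof. by rewrite /vlt opprD addrACA subrr addr0. Qed.

Lemma scalev_gt0 (t : R) (c : Y) : 0 < t -> vlt S 0 c -> vlt S 0 (t *: c).
Proof.
move=> t0; rewrite /vlt !subr0 => -[U [Uo [UK Uc]]].
exists (fun y => U (t^-1 *: y)); split; last split.
- by move=> xs x hx Ux; exact: Uo _ _ (conv_scale _ hx) Ux.
- move=> y /UK h; have := vle_scale (ltW t0) h.
  by rewrite scaler0 scalerA divff ?gt_eqF // scale1r.
- by rewrite scalerA mulVf ?gt_eqF // scale1r.
Qed.

Lemma vlt_half (c : Y) : vlt S 0 c -> vlt S 0 (2^-1 *: c) /\ 2^-1 *: c + 2^-1 *: c = c.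
Proof.
move=> c0; split; first by apply: scalev_gt0; rewrite ?invr_gt0.
by rewrite -scalerDl (_ : 2^-1 + 2^-1 = 1 :> R) ?scale1r //; field.
Qed.

(* Approximate b from above by b + c_0 / (n + 1), c_0 an interior point. *)
Lemma vle_addgt0 (a b : Y) : (forall c, vlt S 0 c -> vle S a (b + c)) -> vle S a b.
Proof.
move=> h; have [c0 hc0] := cone_solid S.
have c0_gt0 : vlt S 0 c0 by rewrite /vlt subr0.
have := conv_add (conv_cst b) (conv_scalar S c0 cvg_harmonic).
rewrite scale0r addr0 => hb.
apply: (vle_closed (conv_cst a) hb) => n; apply/h/scalev_gt0 => //.
by rewrite /harmonic /= invr_gt0 ltr0n.
Qed.

Lemma conv0_vlt (xs : nat -> Y) (c : Y) :
  conv S xs 0 -> vlt S 0 c -> exists N, forall n, (N <= n)%N -> vlt S (xs n) c.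
Proof.
move=> hx; rewrite /vlt subr0 => -[U [Uo [UK Uc]]].
have := conv_add (conv_cst c) (conv_scale (-1) hx).
rewrite scaler0 addr0 => /(Uo _ _)/(_ Uc) [N HN].
by exists N => n /HN Un; exists U; do 2!split=> //; rewrite -scaleN1r.
Qed.

End SolidVectorSpace.

Section ConeMetric.
Variables (R : realType) (Y : lmodType R) (S : solid_vector_space Y).
Variables (X : Type) (d : X -> X -> Y).
Hypothesis hd : is_cone_metric S d.

Lemma dist_ge0 (x y : X) : vle S 0 (d x y).
Proof. by case: hd. Qed.

Lemma dist_eq0 (x y : X) : d x y = 0 <-> x = y.
Proof. by case: hd => _ []. Qed.

Lemma distC (x y : X) : d x y = d y x.
Proof. by case: hd => _ [_ []]. Qed.

Lemma dist_triangle (x y z : X) : vle S (d x y) (d x z + d z y).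
Proof. by case: hd => _ [_ [_]]. Qed.

Lemma dist_le_geometric_sum (y : nat -> X) (e : Y) (lam : R) (j : nat) :
  lam < 1 -> (forall k, (k < j)%N -> vle S (d (y k) (y k.+1)) (lam ^+ k *: e)) ->
  vle S (d (y 0%N) (y j)) (((1 - lam ^+ j) / (1 - lam)) *: e).
Proof.
move=> hl1; have l1 : 1 - lam != 0 by rewrite subr_eq0 eq_sym lt_eqF.
elim: j => [|j IH] hsteps.
  by rewrite (dist_eq0 _ _).2 // expr0 subrr mul0r scale0r; exact: vle_refl.
apply: vle_trans (dist_triangle _ _ (y j)) _.
have -> : (1 - lam ^+ j.+1) / (1 - lam) = (1 - lam ^+ j) / (1 - lam) + lam ^+ j.
  by rewrite exprS; field.
rewrite scalerDl; apply: vleD; last exact: hsteps.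
by apply: IH => k kj; apply: hsteps; exact: ltnW.
Qed.

Lemma dist_le_geometric (y : nat -> X) (e : Y) (lam : R) (j : nat) :
  0 <= lam -> lam < 1 -> vle S 0 e ->
  (forall k, (k < j)%N -> vle S (d (y k) (y k.+1)) (lam ^+ k *: e)) ->
  vle S (d (y 0%N) (y j)) ((1 - lam)^-1 *: e).
Proof.
move=> hl0 hl1 e0 /(dist_le_geometric_sum hl1)/vle_trans; apply.
apply: vle_scale2r e0.
rewrite ler_pdivrMr ?subr_gt0 // mulVf ?subr_eq0 1?eq_sym ?lt_eqF //.
by rewrite lerBlDr lerDl exprn_ge0.
Qed.

Lemma cm_cauchy_geometric (xs : nat -> X) (lam : R) (C : Y) :
  0 <= lam -> lam < 1 ->
  (forall n m, (n <= m)%N -> vle S (d (xs n) (xs m)) (lam ^+ n *: C)) ->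
  cm_cauchy S d xs.
Proof.
move=> hl0 hl1 hxs c c0.
have := conv_scalar S C (cvg_expr (_ : `|lam| < 1)); rewrite ger0_norm // scale0r.
move=> /(_ hl1)/conv0_vlt/(_ c0) [N HN].
exists N => n m nN mN.
wlog nm : n m nN mN / (n <= m)%N.
  move=> W; case: (leqP n m) => h; first exact: W.
  by rewrite distC; apply: W => //; exact: ltnW.
by apply: vle_vlt_trans (hxs _ _ nm) _; apply: HN; exact: ltnW.
Qed.

Lemma cm_conv_dist_le (xs : nat -> X) (xi a : X) (b : Y) (N : nat) :
  cm_conv S d xs xi -> (forall m, (N <= m)%N -> vle S (d a (xs m)) b) ->
  vle S (d a xi) b.
Proof.
move=> hc hb; apply: vle_addgt0 => c /hc [M HM].
apply: vle_trans (dist_triangle _ _ (xs (maxn N M))) _.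
by apply: vleD; [apply: hb; exact: leq_maxl | apply/vltW/HM; exact: leq_maxr].
Qed.

Lemma cm_conv_shift (xs : nat -> X) (xi : X) :
  cm_conv S d xs xi -> cm_conv S d (fun n => xs n.+1) xi.
Proof. by move=> hc c /hc [N HN]; exists N => n nN; apply/HN/leqW. Qed.

Lemma cm_conv_unique (xs : nat -> X) (a b : X) :
  cm_conv S d xs a -> cm_conv S d xs b -> a = b.
Proof.
move=> ha hb; apply/dist_eq0/vle_anti; last exact: dist_ge0.
apply: vle_addgt0 => c /vlt_half [c2 c2c]; rewrite add0r -c2c.
have [[N1 HN1] [N2 HN2]] := (ha _ c2, hb _ c2).
apply: vle_trans (dist_triangle _ _ (xs (maxn N1 N2))) _.
by apply: vleD; apply: vltW; [rewrite distC; apply: HN1 | apply: HN2];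
  rewrite ?leq_maxl ?leq_maxr.
Qed.

Lemma cm_open_oball (z : X) (r : Y) : vlt S 0 r -> cm_open S d (oball S d z r).
Proof. by move=> r0 y hy; exists z, r; split=> //; split. Qed.

Lemma cm_open_eventually (xs : nat -> X) (xi : X) (W : set X) :
  cm_open S d W -> W xi -> cm_conv S d xs xi ->
  exists N, forall n, (N <= n)%N -> W (xs n).
Proof.
move=> /[apply] [[z [r [r0 [hz sub]]]]] hc.
have [N HN] : exists N, forall n, (N <= n)%N -> vlt S (d (xs n) xi) (r - d xi z).
  by apply: hc; rewrite /vlt subr0.
exists N => n /HN h; apply: sub; apply: vle_vlt_trans (dist_triangle _ _ xi) _.
by have := vltD2r (d xi z) h; rewrite subrK.
Qed.

Lemma cm_continuous_at_conv (D : set X) (T : X -> X) (xs : nat -> X) (xi : X) :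
  cm_continuous_at S d D T xi -> (forall n, D (xs n)) -> cm_conv S d xs xi ->
  cm_conv S d (fun n => T (xs n)) (T xi).
Proof.
move=> hT hD hc c c0.
have Txi_ball : oball S d (T xi) c (T xi) by rewrite /oball (dist_eq0 _ _).2.
have [W [Wo [Wxi HW]]] := hT _ (cm_open_oball (z := T xi) c0) Txi_ball.
have [N HN] := cm_open_eventually Wo Wxi hc.
by exists N => n /HN; exact: HW.
Qed.

Lemma cm_closed_graph_conv (D : set X) (T : X -> X) (xs : nat -> X) (a b : X) :
  cm_closed_graph S d D T -> D a -> (forall n, D (xs n)) ->
  cm_conv S d xs a -> cm_conv S d (fun n => T (xs n)) b -> b = T a.
Proof.
move=> hT Da hD hxa hTxb; apply: contrapT => /(hT _ _ Da).
move=> [V1 [V2 [V1o [V2o [V1a [V2b HV]]]]]].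
have [[N1 HN1] [N2 HN2]] :=
  (cm_open_eventually V1o V1a hxa, cm_open_eventually V2o V2b hTxb).
apply: (HV (xs (maxn N1 N2)) (T (xs (maxn N1 N2)))) => //.
  by apply: HN1; rewrite leq_maxl.
by apply: HN2; rewrite leq_maxr.
Qed.

End ConeMetric.

Section PicardIteration.
Variables (R : realType) (Y : lmodType R) (S : solid_vector_space Y).
Variables (X : Type) (d : X -> X -> Y) (D : set X) (T : X -> X) (lam : R) (x0 : X).
Hypotheses (hd : is_cone_metric S d) (hl0 : 0 <= lam) (hl1 : lam < 1).
Hypothesis ha : forall x, D x -> D (T x) -> vle S (d (T x) (T (T x))) (lam *: d x (T x)).
Hypothesis hb : cball S d x0 ((1 - lam)^-1 *: d x0 (T x0)) `<=` D.

Local Notation picard n := (iter n T x0).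
Local Notation step n := (d (picard n) (picard n.+1)).
Local Notation radius := ((1 - lam)^-1 *: d x0 (T x0)).

Lemma picard_cball_of_steps (n : nat) :
  (forall k, (k < n)%N -> vle S (step k) (lam ^+ k *: step 0%N)) ->
  cball S d x0 radius (picard n).
Proof.
move=> hsteps; rewrite /cball (distC hd).
exact: dist_le_geometric (dist_ge0 hd _ _) hsteps.
Qed.

Lemma picard_steps_geometric (n : nat) :
  forall k, (k < n)%N -> vle S (step k) (lam ^+ k *: step 0%N).
Proof.
elim: n => [//|n IH] k; rewrite ltnS leq_eqVlt => /orP [/eqP -> {k} | ]; last exact: IH.
case: n IH => [|p] IH; first by rewrite expr0 scale1r; exact: vle_refl.
have Dp : D (picard p) by apply/hb/picard_cball_of_steps => k kp; apply/IH/ltnW.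
have Dp1 : D (picard p.+1) by exact/hb/picard_cball_of_steps.
apply: vle_trans (ha Dp Dp1) _.
by rewrite exprS -scalerA; apply: vle_scale hl0 (IH _ _).
Qed.

Lemma picard_cball (n : nat) : cball S d x0 radius (picard n).
Proof. exact/picard_cball_of_steps/picard_steps_geometric. Qed.

Lemma picard_mem : forall n, D (picard n).
Proof. by move=> n; apply/hb/picard_cball. Qed.

Lemma picard_step_contract (n k : nat) : vle S (step (n + k)) (lam ^+ k *: step n).
Proof.
elim: k => [|k IH]; first by rewrite addn0 expr0 scale1r; exact: vle_refl.
rewrite addnS; apply: vle_trans (ha (picard_mem _) (picard_mem (n + k).+1)) _.
by rewrite exprS -scalerA; exact: vle_scale hl0 IH.
Qed.

Lemma picard_dist_le_step (n m : nat) :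
  (n <= m)%N -> vle S (d (picard n) (picard m)) ((1 - lam)^-1 *: step n).
Proof.
move=> /subnKC <-; set j := (m - n)%N.
have := @dist_le_geometric _ _ _ _ _ hd (fun k => picard (n + k)) (step n) _ j hl0 hl1.
rewrite addn0; apply; first exact: dist_ge0.
by move=> k _; rewrite addnS; exact: picard_step_contract.
Qed.

Lemma picard_dist_le_geometric (n m : nat) :
  (n <= m)%N -> vle S (d (picard n) (picard m)) (lam ^+ n *: radius).
Proof.
move=> /picard_dist_le_step/vle_trans; apply.
rewrite scalerA mulrC -scalerA; apply: vle_scale; first by rewrite invr_ge0 subr_ge0 ltW.
by have := picard_step_contract 0 n; rewrite add0n.
Qed.

Lemma picard_cauchy : cm_cauchy S d (fun n => picard n).
Proof. exact: (cm_cauchy_geometric hd hl0 hl1 (fun n m => @picard_dist_le_geometric n m)). Qed.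

Variable xi : X.
Hypothesis hxi : cm_conv S d (fun n => picard n) xi.

Lemma picard_limit_cball : cball S d x0 radius xi.
Proof.
rewrite /cball (distC hd); apply: (cm_conv_dist_le (N := 0%N) hd hxi) => m _.
by rewrite (distC hd); exact: picard_cball.
Qed.

Lemma picard_dist_limit_le_step (n : nat) :
  vle S (d (picard n) xi) ((1 - lam)^-1 *: step n).
Proof. exact: (cm_conv_dist_le (N := n) hd hxi (picard_dist_le_step (n := n))). Qed.

Lemma picard_dist_limit_le_geometric (n : nat) :
  vle S (d (picard n) xi) ((lam ^+ n / (1 - lam)) *: d x0 (T x0)).
Proof.
rewrite -scalerA.
exact: (cm_conv_dist_le (N := n) hd hxi (picard_dist_le_geometric (n := n))).
Qed.

Lemma picard_dist_limit_le_prev (n : nat) : (1 <= n)%N ->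
  vle S (d (picard n) xi) ((lam / (1 - lam)) *: d (picard n) (picard n.-1)).
Proof.
case: n => [//|p] _; apply: vle_trans (picard_dist_limit_le_step p.+1) _.
have -> : d (picard p.+1) (picard p.+1.-1) = step p by rewrite (distC hd).
rewrite mulrC -scalerA.
apply: vle_scale; first by rewrite invr_ge0 subr_ge0 ltW.
by have := picard_step_contract p 1; rewrite addn1 expr1.
Qed.

Lemma picard_limit_fixed :
  cm_continuous_at S d D T xi \/ cm_closed_graph S d D T -> T xi = xi.
Proof.
have hTxi : cm_conv S d (fun n => T (picard n)) xi := cm_conv_shift hxi.
case=> [hT | hT].
  exact: (cm_conv_unique hd (cm_continuous_at_conv hd hT picard_mem hxi) hTxi).
by apply/esym/(cm_closed_graph_conv hd hT _ picard_mem hxi hTxi)/hb/picard_limit_cball.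
Qed.

End PicardIteration.

Theorem theorem10p5 (R : realType) (Y : lmodType R) (S : solid_vector_space Y)
  (X : Type) (d : X -> X -> Y) (hd : is_cone_metric S d) (hcomp : cm_complete S d)
  (D : set X) (T : X -> X) (lam : R) (hl0 : 0 <= lam) (hl1 : lam < 1)
  (ha : forall x, D x -> D (T x) ->
        vle S (d (T x) (T (T x))) (lam *: d x (T x)))
  (x0 : X) (hx0 : D x0)
  (hb : cball S d x0 ((1 - lam)^-1 *: d x0 (T x0)) `<=` D) :
  (forall n : nat, D (iter n T x0) /\
     cball S d x0 ((1 - lam)^-1 *: d x0 (T x0)) (iter n T x0)) /\
  exists xi : X,
    cball S d x0 ((1 - lam)^-1 *: d x0 (T x0)) xi /\
    cm_conv S d (fun n => iter n T x0) xi /\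
    (forall n : nat,
       vle S (d (iter n T x0) xi) ((lam ^+ n / (1 - lam)) *: d x0 (T x0))) /\
    (forall n : nat,
       vle S (d (iter n T x0) xi) ((1 - lam)^-1 *: d (iter n T x0) (iter n.+1 T x0))) /\
    (forall n : nat, (1 <= n)%N ->
       vle S (d (iter n T x0) xi) ((lam / (1 - lam)) *: d (iter n T x0) (iter n.-1 T x0))) /\
    (cm_continuous_at S d D T xi \/ cm_closed_graph S d D T -> T xi = xi).
Proof.
split=> [n|].
  exact: conj (picard_mem hd hl0 hl1 ha hb n) (picard_cball hd hl0 hl1 ha hb n).
have [xi hxi] := hcomp _ (picard_cauchy hd hl0 hl1 ha hb).
exists xi; do ![split].
- exact: picard_limit_cball hd hl0 hl1 ha hb _ hxi.
- exact: hxi.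
- exact: picard_dist_limit_le_geometric hd hl0 hl1 ha hb _ hxi.
- exact: picard_dist_limit_le_step hd hl0 hl1 ha hb _ hxi.
- exact: picard_dist_limit_le_prev hd hl0 hl1 ha hb _ hxi.
- exact: picard_limit_fixed hd hl0 hl1 ha hb _ hxi.
Qed.
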